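(* Let $\mathscr A$ be a weight vector of length $n$ and $S\subseteq\{1,\dots,n\}$ with $\Delta_S\ne\emptyset$ in $M^\delta_{0,\mathscr A}$, and let $I$ be a minimal small interval containing $S$. Then for every point of $\Delta_S$, every chord in the collection of chords describing its topological type has $I$ contained entirely in one of the two intervals into which the chord divides $\{1,\dots,n\}$ (no chord separates two elements of $I$).
   Context: A weight vector is $\mathscr A=(a_1,\dots,a_n)$ with $0<a_i\le1$ and $\sum a_i>2$. A nodal genus-zero curve with marked smooth points $x_1,\dots,x_n$ (point $x_i$ of weight $a_i$) is $\mathscr A$-stable if each component has (number of nodes) + (sum of weights of its markings) $>2$, and whenever $x_i$ coincide for all $i\in S$ one has $\sum_{i\in S}a_i\le1$; $\overline M_{0,\mathscr A}$ is Hassett's fine moduli space of such curves, a smooth projective variety. An interval is a set of cyclically consecutive elements of $\{1,\dots,n\}$ (cyclic order $1<\dots<n<1$); it is large if the sum of its weights exceeds $1$ and small otherwise. $M^\delta_{0,\mathscr A}\subset\overline M_{0,\mathscr A}$ is the open subset of curves whose dual graph admits a planar embedding inducing the standard dihedral order on the legs, and such that whenever $x_i=x_j$ for all $i,j\in S$, $S$ is contained in a small interval. Its stratification by topological type has strata indexed by collections of pairwise non-crossing chords of the $n$-gon (sides labeled $1,\dots,n$), each chord dividing the sides into two large intervals, subject to stability of each tile. For $S\subseteq\{1,\dots,n\}$, the coincidence set $\Delta_S\subseteq M^\delta_{0,\mathscr A}$ is the locus where $x_i=x_j$ for all $i,j\in S$. *)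

From HB Require Import structures.
From mathcomp Require Import all_boot all_order all_algebra.
Set Implicit Arguments. Unset Strict Implicit. Unset Printing Implicit Defensive.
Import Order.TTheory GRing.Theory Num.Theory.
Local Open Scope ring_scope.

Section Defs.
Variables (R : realFieldType) (n : nat) (a : 'I_n -> R).

Definition weight_vector : Prop :=
  (forall i, 0 < a i <= 1) /\ 2 < \sum_(i < n) a i.

(* The indices 0..n-1 stand for 1..n; the cyclic order is 0 < 1 < ... < n-1 < 0.
   cint s l = {s, s+1, ..., s+l-1} (mod n). *)
Definition cint (s : 'I_n) (l : nat) : {set 'I_n} :=
  [set i : 'I_n | ((i + n - s) %% n < l)%N].

Definition is_interval (X : {set 'I_n}) : Prop :=
  exists (s : 'I_n) (l : nat), (0 < l <= n)%N /\ X = cint s l.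

Definition weight (X : {set 'I_n}) : R := \sum_(i in X) a i.
Definition large (X : {set 'I_n}) : Prop := 1 < weight X.
Definition small (X : {set 'I_n}) : Prop := weight X <= 1.

(* A chord of the n-gon is represented by the set of sides on one of its two
   sides (the complementary set represents the same chord). *)
Definition separates (c : {set 'I_n}) (i j : 'I_n) : Prop :=
  (i \in c) != (j \in c).

Definition chord_ok (c : {set 'I_n}) : Prop :=
  is_interval c /\ is_interval (~: c) /\ large c /\ large (~: c).

Definition noncrossing (c d : {set 'I_n}) : Prop :=
  c \subset d \/ d \subset c \/ c :&: d = set0 \/ c :|: d = setT.

(* A point of M^delta_{0,A}, recorded by its topological type (collection of
   chords C) and its coincidence relation coin (coin i j  <->  x_i = x_j). *)
Definition is_dpoint (C : {set {set 'I_n}}) (coin : rel 'I_n) : Prop :=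
     (forall i, coin i i)
  /\ (forall i j, coin i j -> coin j i)
  /\ (forall i j k, coin i j -> coin j k -> coin i k)
  /\ (forall c, c \in C -> chord_ok c)
  /\ (forall c d, c \in C -> d \in C -> noncrossing c d)
     (* coinciding markings lie on the same component: no chord separates them *)
  /\ (forall i j c, coin i j -> c \in C -> ~ separates c i j)
  /\ (forall i, weight [set j | coin i j] <= 1)
  /\ (forall i, exists J, [/\ is_interval J, small J & [set j | coin i j] \subset J]).

Definition in_Delta (S : {set 'I_n}) (coin : rel 'I_n) : Prop :=
  forall i j, i \in S -> j \in S -> coin i j.

Definition min_small_interval (S I : {set 'I_n}) : Prop :=
  [/\ is_interval I, small I, S \subset I &
      forall J, is_interval J -> small J -> S \subset J -> J \subset I -> J = I].

End Defs.

From HB Require Import structures.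
From mathcomp Require Import all_boot all_order all_algebra.
From mathcomp Require Import zify.
Import Order.TTheory GRing.Theory Num.Theory.
Set Implicit Arguments. Unset Strict Implicit. Unset Printing Implicit Defensive.

(* The points of S coincide, so S lies on one side of every chord c; let J be
   the other side, a large interval. A minimal small interval I containing S
   has both endpoints in S when it has more than one element: dropping an
   endpoint outside S would leave a smaller small interval containing S. Hence
   if I met J, the interval J would meet I while avoiding both endpoints of I,
   so J would lie inside I and be small, contradicting its largeness. *)

Section CyclicIntervals.
Variable n : nat.

(* [coff s i] is the position of [i] when the cycle is read starting at [s]. *)
Definition coff (s i : 'I_n) : nat := (i + n - s) %% n.

Fact cshift_subproof (s : 'I_n) (k : nat) : ((s + k) %% n < n)%N.
Proof. by case: n s => [|n'] [m m_lt] //=; rewrite ltn_pmod. Qed.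

Definition cshift (s : 'I_n) (k : nat) : 'I_n := Ordinal (cshift_subproof s k).

Lemma mem_cint (s i : 'I_n) (l : nat) : (i \in cint s l) = (coff s i < l)%N.
Proof. by rewrite inE. Qed.

Lemma coffE (s i : 'I_n) : coff s i = if (s <= i)%N then (i - s)%N else (i + n - s)%N.
Proof.
rewrite /coff; have si := ltn_ord s; have ii := ltn_ord i.
case: leqP => [le_si|lt_is]; last by rewrite modn_small; lia.
by rewrite -addnBAC // modnDr modn_small; lia.
Qed.

Lemma cshiftE (s : 'I_n) (k : nat) : (k <= n)%N ->
  nat_of_ord (cshift s k) = if (s + k < n)%N then (s + k)%N else (s + k - n)%N.
Proof.
move=> kn /=; have sn := ltn_ord s; case: ifP => h; first by rewrite modn_small.
by rewrite -{1}(subnK (_ : n <= s + k)%N) ?modnDr ?modn_small; lia.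
Qed.

Lemma coff_lt (s i : 'I_n) : (coff s i < n)%N.
Proof. by rewrite coffE; have := ltn_ord s; have := ltn_ord i; case: ifP => ?; lia. Qed.

Lemma coff_inj (s : 'I_n) : injective (coff s).
Proof.
move=> i j; rewrite !coffE => eq_ij; apply: val_inj => /=.
by move: eq_ij; have := ltn_ord s; have := ltn_ord i; have := ltn_ord j; do 2 case: ifP => ?; lia.
Qed.

Lemma coff_cshift (s : 'I_n) (k : nat) : (k < n)%N -> coff s (cshift s k) = k.
Proof.
move=> kn; rewrite coffE cshiftE; last lia.
have := ltn_ord s; case: (ltnP (s + k) n) => ? /=; case: ifP => ?; lia.
Qed.

Lemma coffss (s : 'I_n) : coff s s = 0%N.
Proof. by rewrite coffE leqnn subnn. Qed.

Lemma coff_rebase (s t i : 'I_n) :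
  coff t i = if (coff s t <= coff s i)%N then (coff s i - coff s t)%N
             else (coff s i + n - coff s t)%N.
Proof.
rewrite !coffE; have := ltn_ord s; have := ltn_ord t; have := ltn_ord i.
by case: (leqP s t) => ?; case: (leqP s i) => ?; case: (leqP t i) => ? /=; case: ifP => ?; lia.
Qed.

Lemma cint1 (s : 'I_n) : cint s 1 = [set s].
Proof.
by apply/setP => i; rewrite mem_cint in_set1 ltnS leqn0 -(inj_eq (coff_inj (s := s))) coffss.
Qed.

Lemma cint_behead (s : 'I_n) (l : nat) : (1 < l <= n)%N ->
  cint (cshift s 1) l.-1 = cint s l :\ s.
Proof.
move=> /andP[l1 ln]; apply/setP => i.
rewrite in_setD1 !mem_cint (coff_rebase s) coff_cshift; last lia.
rewrite -(inj_eq (coff_inj (s := s))) coffss; have := coff_lt s i; case: ifP => ?; lia.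
Qed.

Lemma cint_belast (s : 'I_n) (l : nat) : (0 < l <= n)%N ->
  cint s l.-1 = cint s l :\ cshift s l.-1.
Proof.
move=> /andP[l0 ln]; apply/setP => i.
by rewrite in_setD1 !mem_cint -(inj_eq (coff_inj (s := s))) coff_cshift; lia.
Qed.

Lemma cint_subset_avoid_ends (s t y : 'I_n) (l m : nat) : (l <= n)%N ->
  y \in cint s l -> y \in cint t m ->
  s \notin cint t m -> cshift s l.-1 \notin cint t m ->
  cint t m \subset cint s l.
Proof.
move=> ln yI yJ sJ eJ; apply/subsetP => i; move: yI yJ sJ eJ.
rewrite !mem_cint !(coff_rebase s t) coffss coff_cshift; last by have := ltn_ord s; lia.
have := coff_lt s t; have := coff_lt s y; have := coff_lt s i.
by do 4 case: ifP => ?; lia.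
Qed.

End CyclicIntervals.

Section Weights.
Variables (R : realFieldType) (n : nat) (a : 'I_n -> R).
Local Open Scope ring_scope.
Hypothesis a_ge0 : forall i, 0 <= a i.

Lemma weight_subset (A B : {set 'I_n}) : A \subset B -> weight a A <= weight a B.
Proof.
move=> AB; rewrite /weight [X in _ <= X](big_setID A) /= (setIidPr AB) lerDl.
exact: sumr_ge0.
Qed.

Lemma mem_min_small_interval (S I : {set 'I_n}) (x : 'I_n) :
  min_small_interval a S I -> x \in I -> is_interval (I :\ x) -> x \in S.
Proof.
case=> _ smallI SI minI xI Ix; apply: contraT => xS.
have SIx : S \subset I :\ x.
  by apply/subsetP => i iS; rewrite in_setD1 (subsetP SI) // andbT; apply: contraNneq xS => <-.
have smallIx : small a (I :\ x) by apply: le_trans smallI; exact/weight_subset/subsetDl.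
have := minI _ Ix smallIx SIx (subsetDl _ _).
by move/setP/(_ x); rewrite setD11 xI.
Qed.

Lemma min_small_cint_ends (S : {set 'I_n}) (s : 'I_n) (l : nat) :
  (1 < l <= n)%N -> min_small_interval a S (cint s l) ->
  s \in S /\ cshift s l.-1 \in S.
Proof.
move=> l1n minI.
have l0n : (0 < l <= n)%N by lia.
have l'n : (0 < l.-1 <= n)%N by lia.
split; apply: mem_min_small_interval minI _ _.
- by rewrite mem_cint coffss; lia.
- by rewrite -cint_behead //; exists (cshift s 1), l.-1.
- by rewrite mem_cint coff_cshift; lia.
- by rewrite -cint_belast //; exists s, l.-1.
Qed.

Lemma min_small_interval_side (S I J : {set 'I_n}) :
  is_interval J -> large a J -> S \subset ~: J -> min_small_interval a S I ->
  I \subset ~: J \/ I \subset J.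
Proof.
move=> [t [m [_ ->]]] largeJ SJ minI.
have [[s [l [l0n defI]]] smallI _ _] := minI; subst I.
have [l1|l1n] : l = 1%N \/ (1 < l <= n)%N by lia.
  by rewrite l1 cint1 !sub1set inE; case: (s \in _); [right|left].
left; apply/subsetP => y yI; rewrite inE; apply/negP => yJ.
have notinJ x : x \in S -> x \notin cint t m by move=> /(subsetP SJ); rewrite inE.
have [sS eS] := min_small_cint_ends l1n minI.
have JI : cint t m \subset cint s l.
  by apply: (cint_subset_avoid_ends _ yI yJ); rewrite ?notinJ //; lia.
by have := lt_le_trans largeJ (le_trans (weight_subset JI) smallI); rewrite ltxx.
Qed.
End Weights.

Lemma in_Delta_side (n : nat) (coin : rel 'I_n) (S c : {set 'I_n}) :
  (forall i j, coin i j -> ~ separates c i j) -> in_Delta S coin ->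
  S \subset c \/ S \subset ~: c.
Proof.
move=> nosep HS; have [->|[x xS]] := set_0Vmem S; first by left; exact: sub0set.
have same_side j : j \in S -> (j \in c) = (x \in c).
  by move=> jS; apply/eqP/negPn/negP; exact: nosep (HS _ _ jS xS).
case: (boolP (x \in c)) => xc; [left|right]; apply/subsetP => j jS.
  by rewrite same_side.
by rewrite inE same_side.
Qed.

Theorem mainTheorem12 (R : realFieldType) (n : nat) (a : 'I_n -> R)
  (Ha : weight_vector a) (S : {set 'I_n})
  (C : {set {set 'I_n}}) (coin : rel 'I_n)
  (Hpt : is_dpoint a C coin) (HS : in_Delta S coin)
  (I : {set 'I_n}) (HI : min_small_interval a S I) :
  forall c, c \in C -> I \subset c \/ I \subset ~: c.
Proof.
move=> c cC.
have a_ge0 i : (0 <= a i)%R by have [/(_ i)/andP[/ltW]] := Ha.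
have [_ [_ [_ [chords [_ [nosep _]]]]]] := Hpt.
have [c_int [cC_int [c_large cC_large]]] := chords c cC.
have [Sc|ScC] := in_Delta_side (fun i j coin_ij => nosep i j c coin_ij cC) HS.
  by have := min_small_interval_side a_ge0 cC_int cC_large; rewrite setCK => /(_ _ _ Sc HI).
by have [] := min_small_interval_side a_ge0 c_int c_large ScC HI; [right | left].
Qed.
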